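(* Let $\Gamma$ be an infinite subsemigroup of $M(n,\mathbb Z)$ (the $n\times n$ integer matrices under multiplication) which acts irreducibly on $\mathbb R^n$, i.e. the only $\Gamma$-invariant linear subspaces of $\mathbb R^n$ are $\{0\}$ and $\mathbb R^n$. Then the induced action of $\Gamma$ on the torus $\mathbb T^n=\mathbb R^n/\mathbb Z^n$, given by $A\cdot(x+\mathbb Z^n)=Ax+\mathbb Z^n$, is expansive.
   Context: An endomorphism action $\rho$ of a semigroup $\Gamma$ on a metrizable topological group $X$ is expansive if there is a neighborhood $U$ of the identity with $\bigcap_{\gamma\in\Gamma}\rho(\gamma)^{-1}(U)=\{e\}$ (the identity map may be adjoined to $\Gamma$ without affecting this). *)

From HB Require Import structures.
From mathcomp Require Import all_boot all_order all_algebra.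
From mathcomp Require Import all_classical all_reals all_analysis.
Set Implicit Arguments. Unset Strict Implicit. Unset Printing Implicit Defensive.
Import Order.TTheory GRing.Theory Num.Theory.
Import numFieldNormedType.Exports.
Local Open Scope classical_set_scope.
Local Open Scope ring_scope.

Definition intmxR (R : realType) (n : nat) (A : 'M[int]_n) : 'M[R]_n :=
  map_mx (fun z : int => z%:~R) A.

Definition intvec (R : realType) (n : nat) (k : 'cV[int]_n) : 'cV[R]_n :=
  map_mx (fun z : int => z%:~R) k.

Definition is_lattice_point (R : realType) (n : nat) (x : 'cV[R]_n) : Prop :=
  exists k : 'cV[int]_n, x = intvec R k.

Definition is_subsemigroup (n : nat) (G : set 'M[int]_n) : Prop :=
  forall A B, G A -> G B -> G (A *m B).

Definition is_subspace (R : realType) (n : nat) (V : set 'cV[R]_n) : Prop :=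
  V 0 /\ forall (a : R) u v, V u -> V v -> V (a *: u + v).

Definition acts_irreducibly (R : realType) (n : nat) (G : set 'M[int]_n) : Prop :=
  forall V : set 'cV[R]_n, is_subspace V ->
    (forall A v, G A -> V v -> V (intmxR R A *m v)) ->
    V = [set 0] \/ V = setT.

(* Expansiveness of the induced action on T^n = R^n / Z^n, with the quotient
   topology unfolded: a neighbourhood U of the identity of T^n is described by
   its preimage W in R^n, a Z^n-saturated set which is a neighbourhood of 0.
   The identity map is adjoined to Gamma (the condition W x).  The conclusion
   "the intersection is {e}" says that x + Z^n = Z^n, i.e. x is in Z^n. *)
Definition torus_expansive (R : realType) (n : nat) (G : set 'M[int]_n) : Prop :=
  exists W : set 'cV[R]_n,
    nbhs (0 : 'cV[R]_n) W /\
    (forall x (k : 'cV[int]_n), W x <-> W (x + intvec R k)) /\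
    (forall x : 'cV[R]_n,
        W x -> (forall A, G A -> W (intmxR R A *m x)) -> is_lattice_point x).

(* Choose a finite F in Gamma for which the subspace V_F of vectors whose
   forward orbit under the semigroup generated by F is bounded is minimal;
   then V_F is Gamma-invariant, so V_F = 0 or V_F = R^n by irreducibility.
   If V_F = 0, let x + Z^n stay in a small neighbourhood W of 0 under Gamma and
   lift x to a small vector t.  For B in F, Bt is close to an integer vector
   and, being small, it is close to 0; so the F-orbit of t stays small, t lies
   in V_F = 0 and x + Z^n = 0: the action is expansive.
   If V_F = R^n, every C in Gamma has bounded powers, hence eigenvalues of
   modulus at most 1 and |tr C| <= n.  The trace form (A, B) |-> tr (A B) is
   nondegenerate on the irreducible algebra spanned by Gamma, so A in Gamma is
   determined by the integers tr (A B_j), |tr (A B_j)| <= n, for finitely many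
   B_j in Gamma spanning it: Gamma is finite. *)

From HB Require Import structures.
From mathcomp Require Import all_boot all_order all_algebra.
From mathcomp Require Import all_classical all_reals all_analysis.
From mathcomp Require Import algC ring lra zify.
Set Implicit Arguments. Unset Strict Implicit. Unset Printing Implicit Defensive.
Import Order.TTheory GRing.Theory Num.Theory.
Import numFieldNormedType.Exports.
Local Open Scope classical_set_scope.
Local Open Scope ring_scope.

Lemma ex_minn_prop (P : nat -> Prop) :
  (exists n, P n) -> exists2 n, P n & forall m, P m -> (n <= m)%N.
Proof.
move=> [n Pn].
have [m /asboolP Pm mmin] := ex_minnP (ex_intro (fun k => `[< P k >]) n (asboolT Pn)).
by exists m => // k Pk; apply/mmin/asboolT.
Qed.

Lemma ler_sum_mem (R : numDomainType) (I : eqType) (r : seq I) (F : I -> R) x :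
  x \in r -> (forall y, 0 <= F y) -> F x <= \sum_(y <- r) F y.
Proof. by move=> xr F_ge0; rewrite (big_rem x) //= lerDl sumr_ge0. Qed.

Lemma int_eq0_near (R : realDomainType) (z : int) (y eps : R) :
  `|y - z%:~R| < eps -> `|y| + eps <= 1 -> z = 0.
Proof.
move=> yz y_eps; apply/eqP; rewrite -normr_le0 -ltzD1 add0r -(ltr_int R) intr_norm.
have -> : z%:~R = y - (y - z%:~R) :> R by rewrite subKr.
by apply: le_lt_trans (ler_normB _ _) _; apply: lt_le_trans y_eps; rewrite ltrD2l.
Qed.

Lemma bounded_expr_le1 (R : archiNumFieldType) (x M : R) :
  0 <= x -> (forall k, x ^+ k <= M) -> x <= 1.
Proof.
move=> x_ge0 xM; have [//|x_gt1] := real_leP (ger0_real x_ge0) (@real1 R).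
have x1_gt0 : 0 < x - 1 by rewrite subr_gt0.
have linear_le k : k%:R * (x - 1) <= x ^+ k.
  apply: le_trans (_ : x ^+ k - 1 <= _); last by rewrite lerBlDr lerDl.
  rewrite subrX1 mulrC; apply: ler_wpM2l; first exact: ltW.
  have -> : k%:R = \sum_(i < k) (1 : R) by rewrite sumr_const card_ord.
  by apply: ler_sum => i _; rewrite exprn_ege1 ?ltW.
have M_ge0 : 0 <= M by apply: le_trans (xM 0%N); rewrite expr0.
have := archi_boundP (divr_ge0 M_ge0 (ltW x1_gt0)).
rewrite ltr_pdivrMr // => /lt_le_trans/(_ (linear_le _))/lt_le_trans/(_ (xM _)).
by rewrite ltxx.
Qed.

Lemma finite_set_inj (T : Type) (U : finType) (A : set T) (f : T -> U) :
  {in A &, injective f} -> finite_set A.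
Proof.
move=> /Pinj [g _]; rewrite -(eq_finite_set (card_image g)).
exact: finite_finset.
Qed.

Lemma finite_set_bounded_int_inj (T : Type) (I : finType) (A : set T)
    (f : T -> I -> int) (m : nat) :
    (forall x i, A x -> `|f x i| <= m%:Z) ->
    {in A &, forall x y, f x =1 f y -> x = y} ->
  finite_set A.
Proof.
move=> fm f_inj.
pose enc x := [ffun i => inord (absz (f x i + m%:Z)) : 'I_(2 * m).+1].
apply: (@finite_set_inj _ _ _ enc) => x y Ax Ay /ffunP exy; apply: f_inj => // i.
move: Ax Ay (exy i); rewrite !inE !ffunE => /(fm _ i) fx_m /(fm _ i) fy_m.
move=> /(congr1 val) /=.
have lt c : `|c| <= m%:Z -> (absz (c + m%:Z)%R < (2 * m).+1)%N by lia.
by rewrite !inordK ?lt //; lia.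
Qed.

Lemma mx_eq0_mulmx (R : ringType) m n (A : 'M[R]_(m, n)) :
  (forall v : 'cV[R]_n, A *m v = 0) -> A = 0.
Proof.
move=> A0; apply/matrixP => i j.
by have /matrixP/(_ i 0) := A0 (delta_mx j 0); rewrite -colE !mxE.
Qed.

Lemma mulmx_col_bound (R : numDomainType) m n (B : 'M[R]_(m, n)) (u : 'cV[R]_n) r i :
  (forall j, `|u j 0| <= r) -> `|(B *m u) i 0| <= (\sum_j `|B i j|) * r.
Proof.
move=> ur; rewrite mxE mulr_suml; apply: le_trans (ler_norm_sum _ _ _) _.
by apply: ler_sum => j _; rewrite normrM ler_wpM2l.
Qed.

Lemma mxtrace_pid_mx (R : ringType) n r :
  (r <= n)%N -> \tr (pid_mx r : 'M[R]_n) = r%:R.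
Proof.
move=> le_rn; rewrite /mxtrace.
rewrite (eq_bigr (fun i : 'I_n => if (i < r)%N then 1 else 0)); last first.
  by move=> i _; rewrite mxE eqxx /=; case: ltnP.
rewrite -big_mkcond /= (big_ord_narrow_cond (P := xpredT) le_rn) /=.
by rewrite sumr_const card_ord.
Qed.

Lemma mxtrace_idem (R : fieldType) n (E : 'M[R]_n) :
  E *m E = E -> \tr E = (\rank E)%:R.
Proof.
move=> EE; pose C := col_ebase E; pose B := row_ebase E.
pose P : 'M[R]_n := pid_mx (\rank E).
have dE : E = C *m P *m B by rewrite mulmx_ebase.
have PBCP : P *m (B *m C) *m P = P.
  have : C *m (P *m (B *m C) *m P) *m B = C *m P *m B.
    by rewrite -dE -[in RHS]EE {1 2}dE !mulmxA.
  move/(congr1 (mulmx^~ (invmx B))); rewrite !mulmxK ?row_ebase_unit //.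
  by move/(congr1 (mulmx (invmx C))); rewrite -!mulmxA !mulKmx ?col_ebase_unit.
have PP : P *m P = P by rewrite pid_mx_id ?rank_leq_col.
rewrite -(@mxtrace_pid_mx R _ _ (rank_leq_col E)) -/P -{1}PBCP.
rewrite {1}dE mxtrace_mulC mulmxA [RHS]mxtrace_mulC !mulmxA PP.
by rewrite mxtrace_mulC mulmxA.
Qed.

(* Fitting: write Q = D Q^2 and char_poly Q = X^m q with q(0) != 0; then
   Cayley-Hamilton gives Q q(Q) = D^m Q (Q^m q(Q)) = 0, so
   E = (q(0) - q(Q)) / q(0) is an idempotent polynomial in Q with E Q = Q. *)
Lemma mxrank_sqr_idempotent (R : fieldType) n (Q : 'M[R]_n.+1) :
  \rank (Q *m Q) = \rank Q ->
  exists f : {poly R}, let E := horner_mx Q f * Q in E * E = E /\ E * Q = Q.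
Proof.
move=> rkQQ.
have [D dQ] : exists D, Q = D * (Q * Q).
  have QQ_Q : (Q *m Q <= Q)%MS by exact: submxMl.
  have : (Q <= Q *m Q)%MS by rewrite -(mxrank_leqif_sup QQ_Q) rkQQ.
  by case/submxP => D; exists D.
have QpowD k : Q = D ^+ k * Q ^+ k.+1.
  elim: k => [|k IHk]; first by rewrite expr0 mul1r expr1.
  have DQ : D * Q ^+ k.+2 = Q ^+ k.+1 by rewrite 2!exprS (mulrA Q) mulrA -dQ -exprS.
  by rewrite {1}IHk [D ^+ k.+1]exprSr -mulrA DQ.
have [m [q q0 dp]] := multiplicity_XsubC (char_poly Q) 0.
rewrite (monic_neq0 (char_poly_monic Q)) /= in q0.
have qQ_Q : horner_mx Q q * Q = 0.
  have CH := Cayley_Hamilton Q.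
  rewrite dp subr0 rmorphM rmorphXn /= horner_mx_X in CH.
  have comm_qQ k : GRing.comm (horner_mx Q q) (Q ^+ k).
    by rewrite -{2}(horner_mx_X Q) -rmorphXn; apply: comm_horner_mx2.
  rewrite -[Q in _ * Q]expr1 comm_qQ expr1 {1}(QpowD m) exprS.
  by rewrite -!mulrA -comm_qQ CH !mulr0.
have [h dq] : exists h, q = h * 'X + (q.[0])%:P.
  have /factor_theorem [h dh] : root (q - (q.[0])%:P) 0 by rewrite /root !hornerE subrr.
  by exists h; move: dh; rewrite subr0 => <-; rewrite subrK.
set c := q.[0] in dq q0; have c_neq0 : c != 0 by [].
pose f := - c^-1 *: h; exists f => E.
have hQQ : horner_mx Q h * Q * Q = - (c *: Q).
  apply/eqP; rewrite -addr_eq0 -mul_scalar_mx mulmxE -mulrDl.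
  by rewrite -(horner_mx_C Q) -{2}(horner_mx_X Q) -rmorphM -rmorphD -dq qQ_Q.
have EQ : E * Q = Q.
  by rewrite /E linearZ /= -!scalerAl hQQ scalerN scaleNr opprK scalerA mulVf ?scale1r.
split=> //; rewrite {2}/E -mulrA.
have -> : Q * E = E * Q.
  have fQ_Q : GRing.comm (horner_mx Q f) Q := comm_horner_mx f (commr_refl Q).
  by rewrite /E mulrA -fQ_Q.
by rewrite EQ.
Qed.

Lemma exists_span_seq (K : fieldType) (vT : vectType K) (I : eqType)
    (f : I -> vT) (S : set I) :
  exists2 s : seq I, (forall i, i \in s -> S i) &
    forall i, S i -> f i \in <<map f s>>%VS.
Proof.
have : exists k, exists s, (forall i, i \in s -> S i) /\
    (\dim {: vT} - \dim <<map f s>>)%N = k.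
  by exists (\dim {: vT} - \dim <<map f [::]>>)%N, [::].
case/ex_minn_prop => _ [s [sS <-]] smin; exists s => // i Si; apply/idPn => fi_notin.
have sub : (<<map f s>> <= <<map f (i :: s)>>)%VS.
  by apply: sub_span => x xs; rewrite inE xs orbT.
have lt_dim : (\dim <<map f s>> < \dim <<map f (i :: s)>>)%N.
  rewrite ltn_neqAle (dimv_leqif_sup sub) dimvS // andbT.
  by apply: contra fi_notin => /subvP; apply; rewrite memv_span ?mem_head.
have isS j : j \in i :: s -> S j by case/predU1P => [->|/sS].
have := smin _ (ex_intro _ (i :: s) (conj isS erefl)).
by rewrite leqNgt ltn_sub2l ?(leq_trans lt_dim (dimvS (subvf _))).
Qed.

Lemma span_mulmx_closed (K : fieldType) n (X : seq 'M[K]_n.+1) :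
    (forall A B, A \in X -> B \in X -> A *m B \in <<X>>%VS) ->
  forall Y Z, Y \in <<X>>%VS -> Z \in <<X>>%VS -> Y *m Z \in <<X>>%VS.
Proof.
move=> XM Y Z; rewrite -[X]/(tval (in_tuple X)) => /coord_span -> /coord_span ->.
rewrite mulmx_suml; apply: memv_suml => i _; rewrite mulmx_sumr.
apply: memv_suml => j _; rewrite -scalemxAl -scalemxAr !memvZ //.
by apply: XM; apply: mem_nth.
Qed.

Section TraceRadical.
Variables (R : numFieldType) (n : nat) (L : {vspace 'M[R]_n.+1}).
Hypothesis mulL : forall Y Z, Y \in L -> Z \in L -> Y *m Z \in L.

Definition trace_radical X := X \in L /\ forall Y, Y \in L -> \tr (X *m Y) = 0.

Lemma trace_radicalD X Y :
  trace_radical X -> trace_radical Y -> trace_radical (X + Y).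
Proof.
move=> [XL trX] [YL trY]; split=> [|Z ZL]; first exact: memvD.
by rewrite mulmxDl mxtraceD trX // trY // addr0.
Qed.

Lemma trace_radicalZ a X : trace_radical X -> trace_radical (a *: X).
Proof.
move=> [XL trX]; split=> [|Z ZL]; first exact: memvZ.
by rewrite -scalemxAl mxtraceZ trX // mulr0.
Qed.

Lemma trace_radicalMr X Y : trace_radical X -> Y \in L -> trace_radical (X *m Y).
Proof.
move=> [XL trX] YL; split=> [|Z ZL]; first exact: mulL.
by rewrite -mulmxA trX // mulL.
Qed.

Lemma trace_radical_horner X f :
  trace_radical X -> trace_radical (horner_mx X f * X).
Proof.
move=> radX; elim/poly_ind: f => [|f c IHf].
  by rewrite rmorph0 mul0r -(scale0r X); apply: trace_radicalZ.
rewrite rmorphD rmorphM /= horner_mx_X horner_mx_C mulrDl -mulmxE mul_scalar_mx.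
by apply: trace_radicalD; [apply: trace_radicalMr => //; case: radX|exact: trace_radicalZ].
Qed.

Lemma trace_radical_rank_sqr Q :
  trace_radical Q -> \rank (Q *m Q) = \rank Q -> Q = 0.
Proof.
move=> radQ /mxrank_sqr_idempotent [f]; set E := _ * Q => -[EE EQ].
have [EL trE] := trace_radical_horner f radQ.
have /eqP : \tr E = 0 by rewrite -EE trE.
rewrite mxtrace_idem // pnatr_eq0 mxrank_eq0 => /eqP E0.
by rewrite -EQ E0 mul0r.
Qed.

Lemma trace_radical_min_rank Z X Y :
    trace_radical Z ->
    (forall W, trace_radical W -> W != 0 -> (\rank Z <= \rank W)%N) ->
  trace_radical X -> X = Z *m Y -> X *m Z = 0.
Proof.
move=> [ZL _] Zmin radX dX; apply/eqP; apply: contraT => XZ_neq0.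
have rkXZ : \rank (X *m Z) = \rank Z.
  by apply/eqP; rewrite eqn_leq mxrankM_maxr Zmin //; exact: trace_radicalMr.
have /eqmxP XZ_Z : (X *m Z == Z)%MS by rewrite -(mxrank_leqif_eq (submxMl X Z)) rkXZ.
suff X0 : X = 0 by rewrite X0 mul0mx eqxx in XZ_neq0.
apply: trace_radical_rank_sqr => //.
by rewrite {2}dX mulmxA (eqmxMr Y XZ_Z) dX.
Qed.

Hypothesis L_irr : forall V : set 'cV[R]_n.+1, V 0 ->
  (forall a u v, V u -> V v -> V (a *: u + v)) ->
  (forall Y v, Y \in L -> V v -> V (Y *m v)) -> V = [set 0] \/ V = setT.

(* For Z of minimal rank in the radical, Z L Z = 0 and Z Z = 0, so the vectors
   killed by Z and by Z L form an L-invariant subspace containing the image of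
   Z; irreducibility then forces Z = 0. *)
Lemma trace_radical_eq0 X : trace_radical X -> X = 0.
Proof.
move=> radX; apply/eqP; apply: contraT => X_neq0.
have : exists r, exists Z, [/\ trace_radical Z, Z != 0 & \rank Z = r].
  by exists (\rank X), X.
case/ex_minn_prop => _ [Z [radZ Z_neq0 <-]] rmin.
have Zmin W : trace_radical W -> W != 0 -> (\rank Z <= \rank W)%N.
  by move=> radW W_neq0; apply: rmin; exists W.
have ZYZ Y : Y \in L -> Z *m Y *m Z = 0.
  by move=> YL; apply: (trace_radical_min_rank radZ Zmin (trace_radicalMr radZ YL)).
have ZZ : Z *m Z = 0 := trace_radical_min_rank radZ Zmin radZ (esym (mulmx1 Z)).
pose U (v : 'cV[R]_n.+1) := Z *m v = 0 /\ forall Y, Y \in L -> Z *m Y *m v = 0.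
have ZU (a : 'cV[R]_n.+1) : U (Z *m a).
  by split=> [|Y YL]; rewrite mulmxA ?ZZ ?ZYZ ?mul0mx.
suff : Z = 0 by move/eqP; rewrite (negPf Z_neq0).
apply: mx_eq0_mulmx => a.
case: (L_irr (V := U)) => [| b u v [Zu ZYu] [Zv ZYv] | Y v YL [Zv ZYv] | U0 | UT].
- by split=> [|Y _]; rewrite mulmx0.
- split=> [|Y YL]; first by rewrite mulmxDr -scalemxAr Zu Zv scaler0 addr0.
  by rewrite mulmxDr -scalemxAr ZYu ?ZYv ?scaler0 ?addr0.
- split=> [|Y' Y'L]; first by rewrite mulmxA ZYv.
  by rewrite !mulmxA -(mulmxA Z) ZYv ?mulL.
- by have := ZU a; rewrite U0 => ->.
- by have [] : U a by rewrite UT.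
Qed.

End TraceRadical.

Lemma eigenvalue_bounded_pow (R : archiNumFieldType) n (A : 'M[R]_n) (M : R) z :
  (forall k i j, `|(A ^+ k) i j| <= M) -> eigenvalue A z -> `|z| <= 1.
Proof.
move=> AM /eigenvalueP [v vA v_neq0].
have vAk k : v *m A ^+ k = z ^+ k *: v.
  elim: k => [|k IHk]; first by rewrite !expr0 mulmx1 scale1r.
  by rewrite exprSr -mulmxE mulmxA IHk -scalemxAl vA scalerA -exprSr.
have [i vi_neq0] : exists i, v 0 i != 0.
  apply/existsP; apply: contraR v_neq0 => /existsPn v0.
  by apply/eqP/rowP => j; rewrite mxE; apply/eqP/negPn.
have vi_gt0 : 0 < `|v 0 i| by rewrite normr_gt0.
apply: (@bounded_expr_le1 _ _ ((\sum_j `|v 0 j| * M) / `|v 0 i|)) => // k.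
rewrite ler_pdivlMr // -normrX -normrM.
have /rowP/(_ i) := vAk k; rewrite !mxE => <-.
apply: le_trans (ler_norm_sum _ _ _) _.
by apply: ler_sum => j _; rewrite normrM ler_wpM2l.
Qed.

Lemma mxtrace_bounded_pow (R : archiClosedFieldType) n (A : 'M[R]_n.+1) (M : R) :
  (forall k i j, `|(A ^+ k) i j| <= M) -> `|\tr A| <= n.+1%:R.
Proof.
move=> AM; have [rs drs] := closed_field_poly_normal (char_poly A).
rewrite (monicP (char_poly_monic A)) scale1r in drs.
have size_rs : size rs = n.+1.
  by have := size_char_poly A; rewrite drs size_prod_XsubC => -[].
have -> : \tr A = \sum_(z <- rs) z.
  apply: oppr_inj; rewrite -char_poly_trace // drs.
  by rewrite -coefPn_prod_XsubC size_rs.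
rewrite -size_rs -sum1_size natr_sum.
apply: le_trans (ler_norm_sum _ _ _) _; rewrite !big_seq; apply: ler_sum => z rs_z.
apply: eigenvalue_bounded_pow AM _.
by rewrite eigenvalue_root_char drs root_prod_XsubC.
Qed.

Lemma int_mxtrace_bounded_pow n (C : 'M[int]_n.+1) (M : int) :
  (forall k i j, `|(C ^+ k) i j| <= M) -> `|\tr C| <= n.+1%:R.
Proof.
move=> CM; rewrite -(ler_int algC) intr_norm -trace_map_mx rmorph_nat.
apply: (@mxtrace_bounded_pow _ _ _ M%:~R) => k i j.
by rewrite -rmorphXn mxE -intr_norm ler_int.
Qed.

Section IntegerMatrices.
Variables (R : realType) (n : nat).
Implicit Types A B C : 'M[int]_n.

Lemma intmxR_mul A B : intmxR R (A *m B) = intmxR R A *m intmxR R B.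
Proof. exact: map_mxM. Qed.

Lemma intmxR_expr C k : intmxR R (C ^+ k) = intmxR R C ^+ k.
Proof. exact: rmorphXn. Qed.

Lemma intmxR_intvec A k : intmxR R A *m intvec R k = intvec R (A *m k).
Proof. by rewrite /intvec map_mxM. Qed.

Lemma intmxR_inj : injective (@intmxR R n).
Proof.
move=> A B /matrixP AB; apply/matrixP => i j.
by have := AB i j; rewrite !mxE => /intr_inj.
Qed.

Lemma mxtrace_intmxR A : \tr (intmxR R A) = (\tr A)%:~R.
Proof. exact: trace_map_mx. Qed.

End IntegerMatrices.

Section Subspaces.
Variables (R : realType) (n : nat).
Implicit Types (V : set 'cV[R]_n) (u v : 'cV[R]_n).

Lemma subspaceD V u v : is_subspace V -> V u -> V v -> V (u + v).
Proof. by move=> [_ Vlin] Vu Vv; have := Vlin 1 _ _ Vu Vv; rewrite scale1r. Qed.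

Lemma subspaceZ V a u : is_subspace V -> V u -> V (a *: u).
Proof. by move=> [V0 Vlin] Vu; have := Vlin a _ _ Vu V0; rewrite addr0. Qed.

Lemma subspace_submx V m (M : 'M[R]_(m, n)) (w : 'rV[R]_n) :
  is_subspace V -> (forall i, V (row i M)^T) -> (w <= M)%MS -> V w^T.
Proof.
move=> subV VM /submxP [D ->]; rewrite mulmx_sum_row.
apply: (big_ind (fun w : 'rV_n => V w^T)) => [|x y Vx Vy|i _].
- by rewrite trmx0; case: subV.
- by rewrite linearD; exact: subspaceD subV Vx Vy.
- by rewrite linearZ; exact: subspaceZ subV (VM i).
Qed.

Lemma subspace_rowspace V :
  is_subspace V -> exists M : 'M[R]_n, forall v, V v <-> (v^T <= M)%MS.
Proof.
move=> subV.
have : exists k, exists M : 'M[R]_n, (forall i, V (row i M)^T) /\ (n - \rank M)%N = k.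
  by exists n, 0; split=> [i|]; rewrite ?row0 ?trmx0 ?mxrank0 ?subn0; case: subV.
case/ex_minn_prop => _ [M [VM <-]] Mmin; exists M => v.
split=> [Vv|/(subspace_submx subV VM)]; last by rewrite trmxK.
apply/idPn => vM; pose M' := (M + v^T)%MS.
have VM' i : V (row i M')^T.
  have /sub_addsmxP [[u1 u2] /= ->] := row_sub i M'.
  rewrite linearD /=.
  apply: subspaceD => //; apply: (subspace_submx subV) (submxMl _ _) => //.
  by move=> j; rewrite row_id trmxK.
have rkM : (\rank M < \rank M')%N.
  apply: rank_ltmx; rewrite ltmxE addsmxSl; apply: contra vM.
  exact: submx_trans (addsmxSr M v^T).
have := Mmin _ (ex_intro _ M' (conj VM' erefl)).
by rewrite leqNgt ltn_sub2l ?(leq_trans rkM (rank_leq_col M')).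
Qed.

Lemma subspace_family_min I (P : I -> Prop) (V : I -> set 'cV[R]_n) :
    (exists i, P i) -> (forall i, is_subspace (V i)) ->
  exists2 i, P i & forall j, P j -> V j `<=` V i -> V i `<=` V j.
Proof.
move=> [i0 Pi0] subV.
have /choice [M VM] := fun i => subspace_rowspace (subV i).
have : exists k, exists i, P i /\ \rank (M i) = k by exists (\rank (M i0)), i0.
case/ex_minn_prop => _ [i [Pi <-]] imin; exists i => // j Pj Vji v /VM vMi.
have Mji : (M j <= M i)%MS.
  apply/row_subP => r; rewrite -[row r _]trmxK; apply/VM/Vji/VM.
  by rewrite trmxK row_sub.
apply/VM/(submx_trans vMi).
by rewrite -(mxrank_leqif_sup Mji) eqn_leq mxrankS // imin //; exists j.
Qed.

End Subspaces.

Section BoundedOrbits.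
Variables (R : realType) (n : nat).
Implicit Types (F : seq 'M[R]_n) (A : 'M[R]_n) (v : 'cV[R]_n).

Definition bdd_orbit F v :=
  exists2 T : set 'cV[R]_n, T v &
    (exists r, forall u i, T u -> `|u i 0| <= r) /\
    (forall B u, B \in F -> T u -> T (B *m u)).

Lemma bdd_orbit_subspace F : is_subspace (bdd_orbit F).
Proof.
split.
  exists (fun u => u = 0) => //; split=> [|B u _ ->]; last by rewrite mulmx0.
  by exists 0 => u i ->; rewrite mxE normr0.
move=> a u v [T1 T1u [[r1 T1r] T1F]] [T2 T2v [[r2 T2r] T2F]].
exists (fun w => exists2 x, T1 x & exists2 y, T2 y & w = a *: x + y).
  by exists u => //; exists v.
split=> [|B w BF [x T1x [y T2y ->]]].
  exists (`|a| * r1 + r2) => w i [x T1x [y T2y ->]].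
  rewrite !mxE; apply: le_trans (ler_normD _ _) _; rewrite normrM.
  by apply: lerD; [apply: ler_wpM2l|]; auto.
exists (B *m x); first exact: T1F.
by exists (B *m y); [exact: T2F|rewrite mulmxDr scalemxAr].
Qed.

Lemma bdd_orbit_sub F1 F2 v :
  {subset F1 <= F2} -> bdd_orbit F2 v -> bdd_orbit F1 v.
Proof. by move=> F12 [T Tv [Tr TF]]; exists T => //; split=> // B u /F12; apply: TF. Qed.

Lemma bdd_orbit_consM F A v : bdd_orbit (A :: F) v -> bdd_orbit F (A *m v).
Proof.
move=> [T Tv [Tr TF]]; exists T; first by apply: TF; rewrite ?mem_head.
by split=> // B u BF; apply: TF; rewrite in_cons BF orbT.
Qed.

Lemma bdd_orbit1_expr A v :
  bdd_orbit [:: A] v -> exists r, forall k i, `|(A ^+ k *m v) i 0| <= r.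
Proof.
move=> [T Tv [[r Tr] TA]]; exists r => k i; apply: Tr.
elim: k => [|k IHk]; first by rewrite expr0 mul1mx.
by rewrite exprS -mulmxE -mulmxA; apply: TA; rewrite ?mem_head.
Qed.

Lemma bdd_orbit_stable (G : set 'M[R]_n) :
  exists2 F, (forall B, B \in F -> G B) &
    forall A v, G A -> bdd_orbit F v -> bdd_orbit (A :: F) v.
Proof.
have [|F FG Fmin] := @subspace_family_min _ _ _ (fun F => forall B, B \in F -> G B)
  bdd_orbit _ bdd_orbit_subspace; first by exists [::].
exists F => // A v GA; apply: Fmin.
  by move=> B /predU1P [->|/FG].
by move=> u; apply: bdd_orbit_sub => B BF; rewrite inE BF orbT.
Qed.

End BoundedOrbits.

Section Expansive.
Variables (R : realType) (n : nat).

Definition near_lattice (eps : R) (x : 'cV[R]_n) :=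
  exists k : 'cV[int]_n, forall i, `|x i 0 - (k i 0)%:~R| < eps.

Lemma near_latticeD eps x k :
  near_lattice eps (x + intvec R k) <-> near_lattice eps x.
Proof.
split=> [[l xl]|[l xl]]; [exists (l - k)|exists (l + k)] => i; have := xl i;
  by rewrite !mxE ?intrB ?intrD; congr (`|_| < _); ring.
Qed.

Lemma nbhs0_near_lattice eps : 0 < eps -> nbhs (0 : 'cV[R]_n) (near_lattice eps).
Proof.
move=> eps_gt0; apply/nbhs_ballP; exists eps => // y [_ y_eps]; exists 0 => i.
by have := y_eps i 0; rewrite /ball /= !mxE sub0r normrN subr0.
Qed.

Lemma torus_expansive_of_bdd_orbit (G : set 'M[int]_n) (F : seq 'M[R]_n) :
    is_subsemigroup G -> (forall B, B \in F -> (@intmxR R n @` G) B) ->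
    (forall v, bdd_orbit F v -> v = 0) ->
  torus_expansive R G.
Proof.
move=> Gmul FG bdd0.
pose C := \sum_(B <- F) \sum_i \sum_j `|B i j|.
have C_ge0 : 0 <= C by do 3!apply: sumr_ge0 => ? _.
have rowC B i : B \in F -> \sum_j `|B i j| <= C.
  pose rows (B : 'M[R]_n) := \sum_i \sum_j `|B i j|.
  move=> BF; apply: le_trans (ler_sum_mem (F := rows) BF _).
    by rewrite [leRHS](bigD1 i) //= lerDl; do 2!apply: sumr_ge0 => ? _.
  by move=> ?; do 2!apply: sumr_ge0 => ? _.
pose eps : R := (2 * (C + 1))^-1.
have eps_gt0 : 0 < eps by rewrite invr_gt0; lra.
have C_eps : C * eps + eps <= 1.
  by rewrite -[X in _ + X]mul1r -mulrDl /eps invfM mulrCA mulfV ?mulr1; lra.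
exists (near_lattice eps); split; first exact: nbhs0_near_lattice.
split=> [x k|x [k xk] Gx]; first by rewrite near_latticeD.
pose T (u : 'cV[R]_n) := (forall i, `|u i 0| < eps) /\
  forall A, G A -> near_lattice eps (intmxR R A *m u).
suff /bdd0/eqP : bdd_orbit F (x - intvec R k) by rewrite subr_eq0 => /eqP ->; exists k.
exists T; [split=> [i|A GA]|split].
- by have := xk i; rewrite !mxE.
- by rewrite mulmxBr intmxR_intvec -(near_latticeD _ _ (A *m k)) subrK; exact: Gx.
- by exists eps => u i [u_eps _]; exact: ltW.
move=> B' u BF [u_eps uG]; have [B GB dB] := FG _ BF.
rewrite -dB; split=> [i|A GA]; last by rewrite mulmxA -intmxR_mul; apply/uG/Gmul.
have [l Bul] := uG B GB.
suff l0 : l i 0 = 0 by have := Bul i; rewrite l0 subr0.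
apply: int_eq0_near (Bul i) (le_trans _ C_eps); rewrite lerD2r.
apply: le_trans (mulmx_col_bound _ _ (fun j => ltW (u_eps j))) _.
by apply: ler_wpM2r; [exact: ltW|rewrite dB; exact: rowC].
Qed.

End Expansive.

Section FiniteSemigroup.
Variables (R : realType) (n : nat) (G : set 'M[int]_n.+1).
Hypotheses (Gmul : is_subsemigroup G) (Girr : acts_irreducibly R G).
Hypothesis Gbdd : forall C v, G C -> bdd_orbit [:: intmxR R C] v.

Lemma bdd_orbits_mxtrace C : G C -> `|\tr C| <= n.+1%:R.
Proof.
move=> GC.
have [r rC] := choice (fun j : 'I_n.+1 => bdd_orbit1_expr (Gbdd (delta_mx j 0) GC)).
have r_ge0 : 0 <= \sum_j `|r j| by apply: sumr_ge0.
apply: (@int_mxtrace_bounded_pow _ _ (Num.bound (\sum_j `|r j|))%:Z) => k i j.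
rewrite -(ler_int R) intr_norm; apply: le_trans (ltW (archi_boundP r_ge0)).
have := rC j k i; rewrite -intmxR_expr -colE !mxE => /le_trans; apply.
by apply: le_trans (ler_norm _) _; rewrite [leRHS](bigD1 j) //= lerDl sumr_ge0.
Qed.

Lemma finite_of_bdd_orbits : finite_set G.
Proof.
have [s sG spanG] := exists_span_seq (@intmxR R n.+1) G.
set L := <<map _ s>>%VS in spanG.
have mulL Y Z : Y \in L -> Z \in L -> Y *m Z \in L.
  apply: span_mulmx_closed => _ _ /mapP [A As ->] /mapP [B Bs ->].
  by rewrite -intmxR_mul; apply/spanG/Gmul; apply: sG.
have L_irr (V : set 'cV[R]_n.+1) : V 0 ->
    (forall a u v, V u -> V v -> V (a *: u + v)) ->
    (forall Y v, Y \in L -> V v -> V (Y *m v)) -> V = [set 0] \/ V = setT.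
  by move=> V0 Vlin VL; apply: (Girr (conj V0 Vlin)) => A v GA; exact/VL/spanG.
pose traces A (j : 'I_(size s)) := \tr (A *m s`_j).
apply: (@finite_set_bounded_int_inj _ _ _ traces n.+1).
  by move=> A j GA /=; rewrite -natz; apply/bdd_orbits_mxtrace/Gmul/sG/mem_nth.
move=> A B /[!inE] GA GB trAB'.
have trAB X : X \in s -> \tr (A *m X) = \tr (B *m X).
  move=> Xs; have := trAB' (Ordinal (etrans (index_mem X s) Xs)).
  by rewrite /traces /= nth_index.
have radAB : trace_radical L (intmxR R A - intmxR R B).
  split=> [|Y]; first by rewrite memvB ?spanG.
  rewrite /L -[map _ s]/(tval (in_tuple _)) => /coord_span ->.
  rewrite mulmx_sumr raddf_sum big1 // => i _ /=.
  have i_lt : (i < size s)%N by rewrite -(size_map (@intmxR R _)).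
  rewrite (nth_map 0) // -scalemxAr linearZ mulmxBl linearB /= -!intmxR_mul.
  by rewrite !mxtrace_intmxR trAB ?mem_nth // subrr mulr0.
have /eqP := trace_radical_eq0 mulL L_irr radAB.
by rewrite subr_eq0 => /eqP; apply: intmxR_inj.
Qed.

End FiniteSemigroup.

Theorem corollary3p3 (R : realType) (n : nat) (G : set 'M[int]_n) :
  is_subsemigroup G -> infinite_set G -> acts_irreducibly R G ->
  torus_expansive R G.
Proof.
case: n G => [|n] G Gmul Ginf Girr.
  by apply: (@torus_expansive_of_bdd_orbit _ _ _ [::]) => // v _; exact: flatmx0.
have [F FG Fstable] := bdd_orbit_stable (@intmxR R n.+1 @` G).
have Finv A v : G A -> bdd_orbit F v -> bdd_orbit F (intmxR R A *m v).
  by move=> GA /(Fstable _ _ (imageP _ GA)) /bdd_orbit_consM.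
case: (Girr _ (bdd_orbit_subspace F) Finv) => [F0|FT].
  by apply: torus_expansive_of_bdd_orbit Gmul FG _ => v; rewrite F0.
case: Ginf; apply: finite_of_bdd_orbits Gmul Girr _ => C v GC.
apply: (@bdd_orbit_sub _ _ _ (intmxR R C :: F)).
  by move=> B; rewrite mem_seq1 => /eqP ->; exact: mem_head.
by apply: Fstable (imageP _ GC) _; rewrite FT.
Qed.
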